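(* For each $s\in S_n$ and $w\in S_n$, the action of $s$ on the Schubert class $[\Omega_w]\in H^*_T(G/B)$ has the form $$s\cdot[\Omega_w]=[\Omega_w]+\sum_{v<w}c_v[\Omega_v]$$ for some polynomials $c_v\in\mathbb{C}[t_1,\ldots,t_n]$, where each nonzero $c_v$ has degree $\ell(w)-\ell(v)$.
   Context: Let $G=GL_n(\mathbb{C})$, $B$ (resp. $B^-$) the invertible upper- (resp. lower-) triangular matrices, and $T$ the diagonal torus. Permutations are identified with permutation matrices via $we_i=e_{w(i)}$, and $s_{jk}$ is the transposition of $j,k$. The Bruhat order is $v\le w$ iff $BvB/B\subseteq\overline{BwB/B}$. $\mathrm{Inv}(w)=\{t_i-t_j:i<j,\ w^{-1}(i)>w^{-1}(j)\}$ and $\ell(w)=|\mathrm{Inv}(w)|$. In GKM form, $H^*_T(G/B)$ is the ring of tuples $(p_u)_{u\in S_n}$, $p_u\in\mathbb{C}[t_1,\ldots,t_n]$, with $p_u-p_{s_{jk}u}\in\langle t_j-t_k\rangle$ for all $u$ and $j<k$. $S_n$ acts on polynomials by $(u\cdot f)(t_1,\ldots,t_n)=f(t_{u(1)},\ldots,t_{u(n)})$ and on $H^*_T(G/B)$ by $(u\cdot p)_v=u\cdot p_{u^{-1}v}$. The Schubert class $[\Omega_v]=(p^v_u)_u$ is the equivariant class of $\overline{B^-vB/B}$; equivalently, it is the unique class with $p^v_u=0$ unless $u\ge v$, each nonzero $p^v_u$ homogeneous of degree $\ell(v)$, and $p^v_v=\prod_{\beta\in\mathrm{Inv}(v)}\beta$.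 The Schubert classes form a $\mathbb{C}[t_1,\ldots,t_n]$-basis of $H^*_T(G/B)$. *)

From HB Require Import structures.
From mathcomp Require Import all_boot all_order all_algebra all_fingroup.
From mathcomp Require Import multinomials.mpoly.
From mathcomp Require Import complex.
From mathcomp Require Import reals.

Set Implicit Arguments.
Unset Strict Implicit.
Unset Printing Implicit Defensive.

Import Order.TTheory GRing.Theory Num.Theory.
Local Open Scope ring_scope.

(* S_n is 'S_n, permutations of the index set 'I_n = {0,..,n-1}
   (0-based version of {1,..,n}); the variable t_i is 'X_i.
   Composition of permutations a o b (first b, then a) is written pcomp a b;
   note mathcomp's product satisfies (b * a)%g x = a (b x). *)
Definition pcomp (n : nat) (a b : 'S_n) : 'S_n := (b * a)%g.

(* The coefficient ring C[t_1,...,t_n], with C = R[i] for a real field R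
   of type realType (i.e. C = the complex numbers). *)
Definition Cpoly (R : realType) (n : nat) := {mpoly (complex R)[n]}.

(* Bruhat order on permutation matrices (w e_i = e_{w(i)}, B upper
   triangular): v <= w iff for all p, q,
     #{ j < q | v(j) >= p } <= #{ j < q | w(j) >= p }
   (rank conditions on the south-west submatrices). *)
Definition bruhat_le (n : nat) (v w : 'S_n) : bool :=
  [forall p : 'I_n.+1, forall q : 'I_n.+1,
     #|[set j : 'I_n | (j < q)%N && (p <= v j)%N]|
       <= #|[set j : 'I_n | (j < q)%N && (p <= w j)%N]| ]%N.

Definition bruhat_lt (n : nat) (v w : 'S_n) : bool :=
  (v != w) && bruhat_le v w.

(* Inv(w) = { t_i - t_j : i < j, w^-1(i) > w^-1(j) }, indexed by pairs. *)
Definition inv_pair (n : nat) (w : 'S_n) (ij : 'I_n * 'I_n) : bool :=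
  (ij.1 < ij.2)%N && ((w^-1)%g ij.2 < (w^-1)%g ij.1)%N.

Definition len (n : nat) (w : 'S_n) : nat := #|[set ij | inv_pair w ij]|.

Definition inv_prod (R : realType) (n : nat) (w : 'S_n) : Cpoly R n :=
  \prod_(ij | inv_pair w ij) ('X_ij.1 - 'X_ij.2).

(* Action of u on polynomials: (u.f)(t_1,..,t_n) = f(t_{u(1)},..,t_{u(n)}),
   i.e. substitute t_i := t_{u(i)}; this is mpoly's msym. *)
Definition poly_act (R : realType) (n : nat) (u : 'S_n) (f : Cpoly R n)
  : Cpoly R n := msym u f.

(* GKM presentation: tuples (p_u)_{u in S_n}. *)
Definition mdivides (R : realType) (n : nat) (d f : Cpoly R n) : Prop :=
  exists g : Cpoly R n, f = g * d.

Definition is_gkm_class (R : realType) (n : nat) (p : 'S_n -> Cpoly R n)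
  : Prop :=
  forall (u : 'S_n) (j k : 'I_n), (j < k)%N ->
    mdivides ('X_j - 'X_k) (p u - p (pcomp (tperm j k) u)).

Definition class_act (R : realType) (n : nat) (u : 'S_n)
  (p : 'S_n -> Cpoly R n) : 'S_n -> Cpoly R n :=
  fun v => poly_act u (p (pcomp (u^-1)%g v)).

(* The Schubert class [Omega_v], via its characterization: the class
   supported on {u >= v}, with each nonzero component homogeneous of
   degree l(v), and p_v = prod_{beta in Inv(v)} beta. *)
Definition is_schubert_class (R : realType) (n : nat) (v : 'S_n)
  (p : 'S_n -> Cpoly R n) : Prop :=
  [/\ is_gkm_class p,
      (forall u, ~~ bruhat_le v u -> p u = 0),
      (forall u, p u != 0 -> p u \is (len v).-homog)
    & p v = inv_prod R v].

From Pilot Require Import Defs.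
From HB Require Import structures.
From mathcomp Require Import all_boot all_order all_algebra all_fingroup.
From mathcomp Require Import multinomials.mpoly.
From mathcomp Require Import complex.
From mathcomp Require Import reals.
From mathcomp Require Import zify ring.

(* The heart is a simple transposition s = (j j+1), with root a = t_j - t_{j+1}.
   The GKM conditions make a divide s.[Omega_w] - [Omega_w], and the quotient r
   is again a GKM class, of degree l(w) - 1, supported on the u with w <= u or
   w <= u s. A GKM class of degree d supported on permutations of length > d
   is zero: at a support point x of minimal length, all l(x) roots of Inv(x)
   divide its value. As Bruhat order strictly increases length, this kills r
   when l(w s) > l(w), and otherwise makes r a constant multiple of
   [Omega_{w s}]. Triangularity with homogeneous coefficients is stable under
   products, and transpositions are products of simple ones. *)

Set Implicit Arguments.
Unset Strict Implicit.
Unset Printing Implicit Defensive.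

Import GRing.Theory.
Local Open Scope ring_scope.

(** * Bruhat order and length *)

Section BruhatOrder.
Variable n : nat.
Implicit Types (u v w x : 'S_n) (a b j k : 'I_n).

Definition in_sw (p q i y : nat) : bool := (i < q)%N && (p <= y)%N.

Definition sw_rank v (p q : nat) : nat := #|[set j : 'I_n | in_sw p q j (v j)]|.

Lemma sw_rankE v p q : sw_rank v p q = (\sum_(j : 'I_n) in_sw p q j (v j))%N.
Proof.
rewrite /sw_rank -sum1_card big_mkcond /=.
by apply: eq_bigr => j _; rewrite inE; case: in_sw.
Qed.

Lemma sw_rank_min v p q : sw_rank v p q = sw_rank v (minn p n) (minn q n).
Proof.
apply: eq_card => j; rewrite !inE /in_sw leq_min geq_min.
by rewrite ltn_ord [(n <= _)%N]leqNgt ltn_ord andbT orbF.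
Qed.

Lemma bruhat_leP v w :
  reflect (forall p q, sw_rank v p q <= sw_rank w p q)%N (bruhat_le v w).
Proof.
apply: (iffP forallP) => [vw p q | vw p]; last by apply/forallP => q; apply: vw.
rewrite [sw_rank v _ _]sw_rank_min [sw_rank w _ _]sw_rank_min.
have pn : (minn p n < n.+1)%N by rewrite ltnS geq_minr.
have qn : (minn q n < n.+1)%N by rewrite ltnS geq_minr.
by move/forallP: (vw (Ordinal pn)) => /(_ (Ordinal qn)).
Qed.

Lemma bruhat_le_trans x v w : bruhat_le v x -> bruhat_le x w -> bruhat_le v w.
Proof.
move=> /bruhat_leP vx /bruhat_leP xw; apply/bruhat_leP => p q.
exact: leq_trans (vx p q) (xw p q).
Qed.

Lemma len_le v : (len v <= n * n)%N.
Proof. by rewrite /len (leq_trans (max_card _)) // card_prod card_ord. Qed.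

Lemma invM_tperm x j k z : ((x * tperm j k)^-1)%g z = (x^-1)%g (tperm j k z).
Proof. by rewrite invMg permM tpermV. Qed.

Lemma inv_pair_mul_tperm x j k : (j < k)%N ->
  Defs.inv_pair (x * tperm j k)%g (j, k) = ~~ Defs.inv_pair x (j, k).
Proof.
move=> jk; rewrite /Defs.inv_pair /= !invM_tperm tpermL tpermR jk /=.
have : (x^-1)%g k != (x^-1)%g j by rewrite (inj_eq perm_inj) -val_eqE /=; lia.
rewrite -val_eqE /=; lia.
Qed.

(* Away from (j, k), sorting the images under (j k) maps the inversions of
   x (j k) injectively to inversions of x; the hypothesis is what makes the
   pairs meeting {j, k} land in Inv(x). *)
Lemma card_inv_mul_tperm x j k : (j < k)%N ->
  (k : nat) = j.+1 \/ Defs.inv_pair x (j, k) ->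
  (#|[set ij | Defs.inv_pair (x * tperm j k)%g ij] :\ (j, k)| <=
   #|[set ij | Defs.inv_pair x ij] :\ (j, k)|)%N.
Proof.
move=> jk adj_or_inv; set t := tperm j k.
pose sort_t (ij : 'I_n * 'I_n) := if (t ij.1 < t ij.2)%N then (t ij.1, t ij.2) else ij.
have sort_tK : {in [set ij | Defs.inv_pair (x * t) ij] :\ (j, k),
                 cancel sort_t sort_t}.
  move=> [a b]; rewrite !inE /Defs.inv_pair /= => /andP[_ /andP[ab _]].
  rewrite /sort_t /=; case tab: (t a < t b)%N => /=; last by rewrite tab.
  by rewrite /t !tpermK ab.
rewrite -(card_in_imset (can_in_inj sort_tK)); apply: subset_leq_card.
apply/subsetP => _ /imsetP[[a b] Hab ->].
have {}adj_or_inv : (k : nat) = j.+1 \/ ((x^-1)%g k < (x^-1)%g j)%N.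
  by case: adj_or_inv => [->|/andP[]]; auto.
move: Hab; rewrite !inE /Defs.inv_pair /= !invM_tperm /sort_t /t.
case: (tpermP j k a) => [->|->|/eqP naj /eqP nak];
case: (tpermP j k b) => [->|->|/eqP nbj /eqP nbk];
rewrite ?tpermL ?tpermR ?tpermD //= ?xpair_eqE -?val_eqE /=; try lia.
all: case: ifP => /= ?; rewrite ?xpair_eqE -?val_eqE /=; lia.
Qed.

Lemma lenE x j k : len x =
  (Defs.inv_pair x (j, k) + #|[set ij | Defs.inv_pair x ij] :\ (j, k)|)%N.
Proof. by rewrite /len (cardsD1 (j, k)) inE. Qed.

Lemma len_mul_tperm_lt x j k : (j < k)%N -> Defs.inv_pair x (j, k) ->
  (len (x * tperm j k)%g < len x)%N.
Proof.
move=> jk xjk; have := card_inv_mul_tperm jk (or_intror xjk).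
by rewrite (lenE x j k) (lenE (x * tperm j k)%g j k) inv_pair_mul_tperm // xjk; lia.
Qed.

Lemma len_mul_adj_tperm x j k : (k : nat) = j.+1 ->
  (len (x * tperm j k)%g + Defs.inv_pair x (j, k) =
   len x + ~~ Defs.inv_pair x (j, k))%N.
Proof.
move=> kj; have jk : (j < k)%N by lia.
have le1 := card_inv_mul_tperm (x := x) jk (or_introl kj).
have := card_inv_mul_tperm (x := (x * tperm j k)%g) jk (or_introl kj).
rewrite -mulgA tperm2 mulg1 => le2.
rewrite (lenE x j k) (lenE (x * tperm j k)%g j k) inv_pair_mul_tperm //.
by case: Defs.inv_pair; rewrite (@anti_leq _ _ (introT andP (conj le1 le2))); lia.
Qed.

Lemma sw_rank_mul_tperm v a b p q : a != b ->
  (sw_rank (v * tperm (v a) (v b))%g p q + in_sw p q a (v a) + in_sw p q b (v b) =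
   sw_rank v p q + in_sw p q a (v b) + in_sw p q b (v a))%N.
Proof.
move=> ab; set v' := (v * tperm (v a) (v b))%g.
have v'a : v' a = v b by rewrite permM tpermL.
have v'b : v' b = v a by rewrite permM tpermR.
have v'E j : j != a -> j != b -> v' j = v j.
  by move=> ja jb; rewrite permM tpermD // (inj_eq perm_inj) eq_sym.
have split_ab (f : 'I_n -> nat) :
    (\sum_j f j = f a + f b + \sum_(j | (j != a) && (j != b)) f j)%N.
  by rewrite (bigD1 a) //= (bigD1 b) 1?eq_sym //= addnA.
rewrite !sw_rankE !split_ab v'a v'b.
have -> : (\sum_(j | (j != a) && (j != b)) in_sw p q j (v' j) =
           \sum_(j | (j != a) && (j != b)) in_sw p q j (v j))%N.
  by apply: eq_bigr => j /andP[ja jb]; rewrite v'E.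
lia.
Qed.

Lemma in_sw_swap_le p q (a b y z : nat) : (a < b)%N -> (y < z)%N ->
  (in_sw p q a y + in_sw p q b z <= in_sw p q a z + in_sw p q b y)%N.
Proof.
rewrite /in_sw => ab yz.
by case: (ltnP a q); case: (ltnP b q); case: (leqP p y); case: (leqP p z) => /=; lia.
Qed.

Lemma in_sw_swap_rect p q (a b y z : nat) : (a < b)%N -> (y < z)%N ->
  (in_sw p q a z + in_sw p q b y <=
   in_sw p q a y + in_sw p q b z + [&& a < q, q <= b, y < p & p <= z])%N.
Proof.
rewrite /in_sw => ab yz.
by case: (ltnP a q); case: (ltnP b q); case: (leqP p y); case: (leqP p z) => /=; lia.
Qed.

Lemma sw_rank_mul_tperm_bounds v a b p q : (a < b)%N -> (v a < v b)%N ->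
  let v' := (v * tperm (v a) (v b))%g in
  (sw_rank v p q <= sw_rank v' p q <=
   sw_rank v p q + [&& a < q, q <= b, v a < p & p <= v b])%N.
Proof.
move=> ab vab /=; have := sw_rank_mul_tperm v p q (negbT (ltn_eqF ab)).
have := in_sw_swap_le p q ab vab; have := in_sw_swap_rect p q ab vab.
move: (in_sw p q a (v a)) (in_sw p q b (v b)) => A B.
move: (in_sw p q a (v b)) (in_sw p q b (v a)) => C D.
move: [&& _, _, _ & _] => rect; lia.
Qed.

Lemma bruhat_le_mul_tperm v a b : (a < b)%N -> (v a < v b)%N ->
  bruhat_le v (v * tperm (v a) (v b))%g.
Proof.
by move=> ab vab; apply/bruhat_leP => p q; case/andP: (sw_rank_mul_tperm_bounds p q ab vab).
Qed.

(* Compare the south-west ranks at (v a, a + 1). *)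
Lemma bruhat_first_diff v w a : bruhat_le v w ->
  (forall j, (j < a)%N -> v j = w j) -> v a != w a -> (v a < w a)%N.
Proof.
move=> /bruhat_leP vw pre vwa; rewrite ltn_neqAle val_eqE vwa /=.
have := vw (v a) a.+1.
rewrite !sw_rankE (bigD1 a) //= [X in (_ <= X)%N](bigD1 a) //=.
have -> : (\sum_(j | j != a) in_sw (v a) a.+1 j (v j) =
           \sum_(j | j != a) in_sw (v a) a.+1 j (w j))%N.
  apply: eq_bigr => j ja; rewrite /in_sw ltnS leq_eqVlt val_eqE (negbTE ja) /=.
  by case: ltnP => // /pre ->.
by rewrite /in_sw ltnSn leqnn /=; case: leqP => //; lia.
Qed.

(* Pointwise, a point of v in the region that w misses lies above w a, and is
   then paid for by the rank inequality at (w a + 1, q). *)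
Lemma sw_rank_lt_rect v w a b p q :
  bruhat_le v w -> (forall j, (j < a)%N -> v j = w j) ->
  (forall j, (a < j < b)%N -> ~~ (v a < v j <= w a)%N) ->
  [&& a < q, q <= b, v a < p & p <= v b]%N -> (v b <= w a)%N ->
  (sw_rank v p q < sw_rank w p q)%N.
Proof.
move=> /bruhat_leP vw pre gap /and4P[aq qb vap pvb] vbX.
have pointwise j :
    (in_sw p q j (v j) + (j == a) + in_sw (w a).+1 q j (w j) <=
     in_sw p q j (w j) + in_sw (w a).+1 q j (v j))%N.
  rewrite /in_sw; case: (ltngtP j a) => [ja | aj | /val_inj ->].
  - by rewrite (pre j ja) -val_eqE /= (ltn_eqF ja) addn0 addnC.
  - rewrite -val_eqE /= (gtn_eqF aj) addn0; case: (ltnP j q) => //= jq.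
    have := gap j; rewrite aj (leq_trans jq qb) => /(_ isT).
    by case: (leqP p (v j)); case: (leqP p (w j)); case: (leqP (w a).+1 (w j));
      case: (leqP (w a).+1 (v j)) => /=; lia.
  - rewrite eqxx aq (leqNgt p (v a)) vap ltnn (leq_trans pvb vbX) /=.
    by case: leqP.
have := @leq_sum _ (index_enum _) xpredT _ _ (fun j _ => pointwise j).
rewrite !big_split /= -!sw_rankE.
have -> : (\sum_(j : 'I_n) (j == a) = 1)%N.
  by rewrite (bigD1 a) //= eqxx big1 // => j /negbTE ->.
have := vw (w a).+1 q; lia.
Qed.

(* The lifting step: with a the first position where v and w differ and b > a
   the first position with v a < v b <= w a, swapping the values at a and b
   stays below w. *)
Lemma bruhat_lift v w : bruhat_le v w -> v != w ->
  exists2 v', bruhat_le v' w & (len v < len v')%N.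
Proof.
move=> vw nvw.
have [a [vwa pre]] : exists a, v a != w a /\ forall j, (j < a)%N -> v j = w j.
  have [a0 vwa0] : exists a, v a != w a.
    case: (pickP (fun a => v a != w a)) => [a vwa | vw_eq]; first by exists a.
    by case/eqP: nvw; apply/permP => j; apply/eqP/negbFE/vw_eq.
  have [a vwa amin] := @arg_minnP _ a0 (fun j => v j != w j) val vwa0.
  exists a; split => // j ja; apply/eqP; apply: contraTT ja => /amin.
  by rewrite -leqNgt.
have va_lt := bruhat_first_diff vw pre vwa.
have [c vc ac] : exists2 c, v c = w a & (a < c)%N.
  exists ((v^-1)%g (w a)); first by rewrite permKV.
  case: ltngtP => // [ca | /val_inj ca].
  - by have := pre _ ca; rewrite permKV => /perm_inj wca; rewrite -wca ltnn in ca.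
  - by move: vwa; rewrite {1}ca permKV eqxx.
have Pc : (a < c)%N && (v a < v c <= w a)%N by rewrite ac vc va_lt leqnn.
have [b /and3P[ab vab vbX] bmin] :=
  @arg_minnP _ c (fun j => (a < j)%N && (v a < v j <= w a)%N) val Pc.
exists (v * tperm (v a) (v b))%g.
  apply/bruhat_leP => p q.
  have /andP[_ le_rect] := sw_rank_mul_tperm_bounds p q ab vab.
  apply: leq_trans le_rect _; case rect: [&& _, _, _ & _].
    rewrite addn1; apply: sw_rank_lt_rect vw pre _ rect vbX.
    move=> j /andP[aj jb]; apply/negP => vj.
    by have := bmin j; rewrite aj vj => /(_ isT); rewrite leqNgt jb.
  by rewrite addn0; apply/bruhat_leP.
have := len_mul_tperm_lt (x := (v * tperm (v a) (v b))%g) vab.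
rewrite -mulgA tperm2 mulg1; apply.
by rewrite /Defs.inv_pair /= !invM_tperm tpermL tpermR !permK vab ab.
Qed.

Lemma bruhat_len_lt v w : bruhat_le v w -> v != w -> (len v < len w)%N.
Proof.
move: {2}(n * n - len v)%N (leqnn (n * n - len v)) => k.
elim: k v => [|k IH] v bound vw nvw; have [v' v'w lt] := bruhat_lift vw nvw.
  by have := len_le v'; lia.
case: (eqVneq v' w) => [<- // | nv'w].
have bound' : (n * n - len v' <= k)%N by have := len_le v'; lia.
exact: ltn_trans lt (IH v' bound' v'w nv'w).
Qed.

Lemma bruhat_len_le v w : bruhat_le v w -> (len v <= len w)%N.
Proof. by case: (eqVneq v w) => [-> | nvw vw]; last exact/ltnW/bruhat_len_lt. Qed.

Lemma bruhat_lt_len v w : bruhat_lt v w -> (len v < len w)%N.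
Proof. by case/andP=> nvw vw; apply: bruhat_len_lt. Qed.

Lemma bruhat_lt_trans x v w : bruhat_lt v x -> bruhat_lt x w -> bruhat_lt v w.
Proof.
move=> vx xw; have := ltn_trans (bruhat_lt_len vx) (bruhat_lt_len xw).
case/andP: vx => _ vx; case/andP: xw => _ xw.
by rewrite /bruhat_lt (bruhat_le_trans vx xw) andbT; apply: contraTneq => ->; rewrite ltnn.
Qed.

Lemma bruhat_le_mul_adj u w j k : (k : nat) = j.+1 ->
  bruhat_le w (u * tperm j k)%g ->
  (len w <= len u)%N \/ ((u * tperm j k)%g = w /\ ~~ Defs.inv_pair u (j, k)).
Proof.
move=> kj wus; have lenE := len_mul_adj_tperm u kj; have le_w := bruhat_len_le wus.
case: (eqVneq (u * tperm j k)%g w) => [uw | nuw].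
  by case: Defs.inv_pair lenE => /= lenE; [left; lia | right].
have lt_w : (len w < len (u * tperm j k)%g)%N by apply: bruhat_len_lt; rewrite // eq_sym.
by left; case: Defs.inv_pair lenE => /= lenE; lia.
Qed.

End BruhatOrder.

(** * Homogeneity and divisibility by the roots t_a - t_b *)

Section Homogeneity.
Variables (K : idomainType) (n : nat).
Implicit Types (p : {mpoly K[n]}).

Lemma msize_homog p d : p != 0 -> p \is d.-homog -> msize p = d.+1.
Proof.
move=> nz_p hp; rewrite (mpolySpred _ nz_p).
by rewrite (dhomog_uniq nz_p hp (dhomog_msize hp)).
Qed.

Lemma msize_le_homog p d : (p != 0 -> p \is d.-homog) -> (msize p <= d.+1)%N.
Proof.
move=> hp; case: (eqVneq p 0) => [-> | nz_p]; first by rewrite msize0.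
by rewrite (msize_homog nz_p (hp nz_p)).
Qed.

Lemma msym_homog (s : 'S_n) p d : p \is d.-homog -> msym s p \is d.-homog.
Proof. by move=> hp; rewrite -(pihomog_dE hp) msym_pihomog pihomogP. Qed.

Lemma msymXU (s : 'S_n) i : msym s ('X_i : {mpoly K[n]}) = 'X_(s i).
Proof. by rewrite /msym mmapX mmap1U. Qed.

Lemma mpolyXU_inj : injective (fun i : 'I_n => 'X_i : {mpoly K[n]}).
Proof.
move=> i j /(congr1 (mcoeff U_(i))); rewrite !mcoeffXU eqxx.
by case: eqP => // _ /eqP; rewrite oner_eq0.
Qed.

End Homogeneity.

Section RootDivisibility.
Variables (R : realType) (n : nat).
Local Notation P := {mpoly (complex R)[n]}.
Implicit Types (a b c d i : 'I_n) (f g : P) (x : 'S_n).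

Definition tdiff a b : P := 'X_a - 'X_b.

Lemma mdivides0 (e : P) : mdivides e 0.
Proof. by exists 0; rewrite mul0r. Qed.

Lemma mdividesD (e : P) f g : mdivides e f -> mdivides e g -> mdivides e (f + g).
Proof. by move=> [f' ->] [g' ->]; exists (f' + g'); rewrite mulrDl. Qed.

Lemma mdividesN (e : P) f : mdivides e f -> mdivides e (- f).
Proof. by move=> [f' ->]; exists (- f'); rewrite mulNr. Qed.

Lemma mdividesB (e : P) f g : mdivides e f -> mdivides e g -> mdivides e (f - g).
Proof. by move=> ef eg; apply/mdividesD/mdividesN. Qed.

Lemma mdividesMl (e : P) f g : mdivides e g -> mdivides e (f * g).
Proof. by move=> [g' ->]; exists (f * g'); rewrite mulrA. Qed.

Lemma mdividesMr (e : P) f g : mdivides e f -> mdivides e (f * g).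
Proof. by rewrite mulrC; apply: mdividesMl. Qed.

Lemma mdividesZ (e : P) (k : complex R) f : mdivides e f -> mdivides e (k *: f).
Proof. by move=> [f' ->]; exists (k *: f'); rewrite scalerAl. Qed.

Lemma mdivides_msym (s : 'S_n) (e : P) f :
  mdivides e f -> mdivides (msym s e) (msym s f).
Proof. by move=> [f' ->]; exists (msym s f'); rewrite msymM. Qed.

Lemma mdivides_sub_comp (t : n.-tuple P) (e : P) :
  (forall i, mdivides e ('X_i - tnth t i)) -> forall f, mdivides e (f - (f \mPo t)).
Proof.
move=> eX.
have eM f g : mdivides e (f - (f \mPo t)) -> mdivides e (g - (g \mPo t)) ->
    mdivides e (f * g - ((f * g) \mPo t)).
  move=> ef eg; rewrite rmorphM.
  have -> : f * g - (f \mPo t) * (g \mPo t) =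
            f * (g - (g \mPo t)) + (f - (f \mPo t)) * (g \mPo t).
    by rewrite mulrBr mulrBl addrA subrK.
  by apply: mdividesD; [apply: mdividesMl | apply: mdividesMr].
have eXm m : mdivides e ('X_[m] - ('X_[m] \mPo t)).
  rewrite mpolyXE_id; elim/big_rec: _ => [|i g _ eg].
    by rewrite comp_mpoly1 subrr; apply: mdivides0.
  apply: (eM _ _ _ eg); elim: (m i) => [|k IH].
    by rewrite expr0 comp_mpoly1 subrr; apply: mdivides0.
  by rewrite exprS; apply: (eM _ _ _ IH); rewrite comp_mpolyXU -tnth_nth.
move=> f; rewrite (mpolyE f); elim/big_rec: _ => [|m g _ eg].
  by rewrite comp_mpoly0 subrr; apply: mdivides0.
rewrite comp_mpolyD opprD addrACA; apply: mdividesD eg.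
by rewrite comp_mpolyZ -scalerBr; apply: mdividesZ.
Qed.

Lemma msym_comp (s : 'S_n) f : msym s f = (f \mPo [tuple 'X_(s i) | i < n]).
Proof.
have <- : [tuple tnth [tuple 'X_j | j < n] (s i) | i < n] =
          [tuple 'X_(s i) | i < n] :> n.-tuple P.
  by apply: eq_from_tnth => i; rewrite !tnth_mktuple.
by rewrite -msym_mPo comp_mpoly_id.
Qed.

Lemma mdivides_sub_msym a b f : mdivides (tdiff a b) (f - msym (tperm a b) f).
Proof.
rewrite msym_comp; apply: mdivides_sub_comp => i; rewrite tnth_mktuple.
case: tpermP => [-> | -> | _ _]; last by rewrite subrr; apply: mdivides0.
  by exists 1; rewrite mul1r.
by exists (-1); rewrite mulN1r opprB.
Qed.

(* Substituting t_a := t_b is the evaluation map whose kernel is (t_a - t_b). *)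
Definition tsubst a b : n.-tuple P := [tuple if i == a then 'X_b else 'X_i | i < n].

Lemma tsubstX a b i : ('X_i \mPo tsubst a b) = if i == a then 'X_b else 'X_i.
Proof. by rewrite comp_mpolyXU -tnth_nth tnth_mktuple. Qed.

Lemma mdivides_tdiffP a b f : mdivides (tdiff a b) f <-> (f \mPo tsubst a b) = 0.
Proof.
split => [[g ->] | f0].
  by rewrite rmorphM rmorphB /= !tsubstX eqxx; case: eqP => [-> |]; rewrite subrr mulr0.
rewrite -[f]subr0 -f0; apply: mdivides_sub_comp => i.
rewrite tnth_mktuple; case: eqP => [-> | _]; last by rewrite subrr; apply: mdivides0.
by exists 1; rewrite mul1r.
Qed.

Lemma tdiff_neq0 a b : a != b -> tdiff a b != 0.
Proof. by apply: contraNneq => /eqP; rewrite subr_eq0 => /eqP /mpolyXU_inj ->. Qed.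

Lemma tdiff_mPo_neq0 a b c d : (a < b)%N -> (c < d)%N -> (a, b) != (c, d) ->
  (tdiff c d \mPo tsubst a b) != 0.
Proof.
move=> ab cd neq; rewrite rmorphB /= !tsubstX.
case: ifP => [/eqP ca | _]; case: ifP => [/eqP da | _]; apply: tdiff_neq0.
- by move: cd; rewrite ca da ltnn.
- by apply: (contraNneq _ neq) => <-; rewrite ca.
- by move: cd; rewrite da => ca; rewrite -val_eqE /= neq_ltn (ltn_trans ca ab).
- by rewrite -val_eqE /= neq_ltn cd.
Qed.

Lemma mdivides_tdiff_mulr a b c d g : (a < b)%N -> (c < d)%N -> (a, b) != (c, d) ->
  mdivides (tdiff a b) (g * tdiff c d) -> mdivides (tdiff a b) g.
Proof.
move=> ab cd neq /mdivides_tdiffP dvd_g.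
have : (g \mPo tsubst a b) * (tdiff c d \mPo tsubst a b) == 0.
  by move: dvd_g; rewrite rmorphM => /eqP.
rewrite mulf_eq0 => /orP[/eqP/mdivides_tdiffP // | tdiff0].
by case/negP: (tdiff_mPo_neq0 ab cd neq).
Qed.

Lemma mdivides_tdiff_mul_prod a b (S : seq ('I_n * 'I_n)) g :
  (a < b)%N -> (a, b) \notin S -> all (fun p : 'I_n * 'I_n => p.1 < p.2)%N S ->
  mdivides (tdiff a b) (g * \prod_(p <- S) tdiff p.1 p.2) -> mdivides (tdiff a b) g.
Proof.
move=> ab; elim: S g => [|[c d] S IH] g /=; first by rewrite big_nil mulr1.
rewrite in_cons negb_or => /andP[ab_cd abS] /andP[cd ltS].
rewrite big_cons mulrA => /(IH _ abS ltS).
exact: mdivides_tdiff_mulr ab cd ab_cd.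
Qed.

Lemma mdivides_prod_tdiff (S : seq ('I_n * 'I_n)) f :
  uniq S -> all (fun p : 'I_n * 'I_n => p.1 < p.2)%N S ->
  (forall p, p \in S -> mdivides (tdiff p.1 p.2) f) ->
  mdivides (\prod_(p <- S) tdiff p.1 p.2) f.
Proof.
elim: S f => [|[a b] S IH] f /=; first by exists f; rewrite big_nil mulr1.
move=> /andP[abS uS] /andP[ab ltS] dvdS.
have [g fE] : mdivides (\prod_(p <- S) tdiff p.1 p.2) f.
  by apply: IH => // p pS; apply: dvdS; rewrite in_cons pS orbT.
have /(mdivides_tdiff_mul_prod ab abS ltS) [h gE] :
    mdivides (tdiff a b) (g * \prod_(p <- S) tdiff p.1 p.2).
  by rewrite -fE; apply: (dvdS (a, b)); rewrite mem_head.
by exists h; rewrite fE gE big_cons /= mulrA.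
Qed.

Lemma tdiff_homog a b : tdiff a b \is 1.-homog.
Proof. by rewrite rpredB // dhomogX /= mdeg1. Qed.

Lemma mdivides_tdiffC a b f : mdivides (tdiff a b) f -> mdivides (tdiff b a) f.
Proof. by move=> [g ->]; exists (- g); rewrite /tdiff mulNr -mulrN opprB. Qed.

Lemma msize_mul_tdiff a b g : a != b -> g != 0 ->
  msize (g * tdiff a b) = (msize g).+1.
Proof.
move=> ab nz_g; rewrite msizeM ?tdiff_neq0 //.
by rewrite (msize_homog (tdiff_neq0 ab) (tdiff_homog a b)) addn2.
Qed.

Lemma inv_prodE x : inv_prod R x = \prod_(ij | Defs.inv_pair x ij) tdiff ij.1 ij.2.
Proof. by []. Qed.

Lemma inv_prod_homog x : inv_prod R x \is (len x).-homog.
Proof.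
rewrite inv_prodE /len -sum1dep_card.
apply: (big_ind2 (fun (p : P) (k : nat) => p \is k.-homog)) => //.
- exact: dhomog1.
- by move=> p1 k1 p2 k2; apply: dhomogM.
- by move=> ij _; apply: tdiff_homog.
Qed.

Lemma inv_prod_neq0 x : inv_prod R x != 0.
Proof.
apply/prodf_neq0 => ij /andP[lt _]; apply: tdiff_neq0.
by rewrite -val_eqE /= neq_ltn lt.
Qed.

Lemma msize_inv_prod x : msize (inv_prod R x) = (len x).+1.
Proof. exact: msize_homog (inv_prod_neq0 x) (inv_prod_homog x). Qed.

Lemma mdivides_inv_prod x f :
  (forall j k, Defs.inv_pair x (j, k) -> mdivides (tdiff j k) f) ->
  mdivides (inv_prod R x) f.
Proof.
move=> dvd_inv; rewrite inv_prodE -big_filter.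
apply: mdivides_prod_tdiff; first by rewrite filter_uniq // index_enum_uniq.
  by apply/allP => p; rewrite mem_filter => /andP[/andP[]].
by move=> [j k]; rewrite mem_filter => /andP[/dvd_inv].
Qed.

End RootDivisibility.

Arguments tdiff {R n}.
Arguments tdiff_neq0 {R n a b}.
Arguments tdiff_homog {R n}.

(** * GKM classes *)

Section GKMClasses.
Variables (R : realType) (n : nat).
Local Notation P := {mpoly (complex R)[n]}.
Implicit Types (p q : 'S_n -> P) (s u x : 'S_n).

Lemma gkm_classD p q :
  is_gkm_class p -> is_gkm_class q -> is_gkm_class (fun u => p u + q u).
Proof.
by move=> hp hq u j k jk; rewrite opprD addrACA; apply: mdividesD (hp _ _ _ jk) (hq _ _ _ jk).
Qed.

Lemma gkm_classN p : is_gkm_class p -> is_gkm_class (fun u => - p u).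
Proof. by move=> hp u j k jk; rewrite -opprD; apply/mdividesN/hp. Qed.

Lemma class_actE s p u : class_act s p u = msym s (p (Defs.pcomp s^-1 u)).
Proof. by []. Qed.

Lemma class_act_gkm s p : is_gkm_class p -> is_gkm_class (class_act s p).
Proof.
move=> hp u j k jk; rewrite !class_actE /Defs.pcomp -msymB.
set j' := (s^-1)%g j; set k' := (s^-1)%g k.
have -> : (u * tperm j k * s^-1 = u * s^-1 * tperm j' k')%g.
  by rewrite -tpermJ /conjg invgK !mulgA mulgKV.
have -> : 'X_j - 'X_k = msym s (tdiff j' k') :> P by rewrite msymB !msymXU !permKV.
apply: mdivides_msym; case: (ltngtP j' k') => [lt | gt | /val_inj eq].
- exact: hp.
- by rewrite tpermC; apply/mdivides_tdiffC/hp.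
- by move/perm_inj: eq jk => ->; rewrite ltnn.
Qed.

Lemma class_actM a b p u : class_act a (class_act b p) u = class_act (b * a) p u.
Proof. by rewrite /class_act /poly_act /Defs.pcomp -msymMm invMg mulgA. Qed.

Lemma class_act1 p u : class_act 1 p u = p u.
Proof. by rewrite /class_act /poly_act /Defs.pcomp invg1 mulg1 msym1m. Qed.

(* For an inversion (j, k) of x, the GKM condition along the edge from x to the
   shorter x (j k) makes t_j - t_k divide p_x. *)
Lemma gkm_mdivides_inv_prod p x : is_gkm_class p ->
  (forall u, p u != 0 -> (len x <= len u)%N) -> mdivides (inv_prod R x) (p x).
Proof.
move=> hp xmin; apply: mdivides_inv_prod => j k xjk.
have jk : (j < k)%N by case/andP: xjk.
suff <- : p x - p (Defs.pcomp (tperm j k) x) = p x by apply: hp.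
suff -> : p (Defs.pcomp (tperm j k) x) = 0 by rewrite subr0.
apply/eqP; apply: contraTT (len_mul_tperm_lt jk xjk) => /xmin.
by rewrite -leqNgt.
Qed.

Lemma gkm_class_eq0 p (D : nat) : is_gkm_class p ->
  (forall u, p u != 0 -> (msize (p u) <= D)%N) ->
  (forall u, p u != 0 -> (D <= len u)%N) -> forall u, p u = 0.
Proof.
move=> hp hsize hlen u0; apply/eqP/negP => /negP nz0.
have [x nzx xmin] := @arg_minnP _ u0 (fun u => p u != 0) (fun u => len u) nz0.
have [g pxE] := gkm_mdivides_inv_prod hp xmin.
have nz_g : g != 0 by apply: contraNneq nzx => g0; rewrite pxE g0 mul0r.
have := leq_trans (hsize x nzx) (hlen x nzx).
rewrite pxE msizeM ?inv_prod_neq0 // msize_inv_prod addnS /= -{2}[len x]add0n.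
by rewrite leq_add2r leqn0 msize_poly_eq0 (negbTE nz_g).
Qed.

Lemma gkm_divided_difference p (j k : 'I_n) : (j < k)%N -> is_gkm_class p ->
  exists2 r : 'S_n -> P, is_gkm_class r &
    forall u, class_act (tperm j k) p u - p u = r u * tdiff j k.
Proof.
move=> jk hp; set s := tperm j k.
have jnk : j != k by rewrite -val_eqE /= neq_ltn jk.
have nz_a : tdiff j k != 0 :> P := tdiff_neq0 jnk.
set q := fun u => class_act s p u - p u.
have q_gkm : is_gkm_class q by apply/gkm_classD/gkm_classN/hp/class_act_gkm.
have qE u : q u = msym s (p (u * s)%g) - p u.
  by rewrite /q /class_act /poly_act /Defs.pcomp tpermV.
have ss : (s * s = 1)%g by rewrite tperm2.
have msymK (f : P) : msym s (msym s f) = f by rewrite -msymMm ss msym1m.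
have dvd_q u : mdivides (tdiff j k) (q u).
  have -> : q u = - (p u - p (u * s)%g) - (p (u * s)%g - msym s (p (u * s)%g)).
    by rewrite qE; ring.
  by apply: mdividesB; [apply/mdividesN/hp | apply: mdivides_sub_msym].
have [r rE] : exists r : 'S_n -> P, forall u, q u = r u * tdiff j k.
  exact: fin_all_exists dvd_q.
(* Along the edge (j k) itself r is s-equivariant; along any other edge the
   root is coprime to t_j - t_k. *)
exists r => // u j' k' jk'.
have [[-> ->] | ne] := eqVneq (j', k') (j, k).
  have -> : r (Defs.pcomp s u) = msym s (r u).
    have msym_a : msym s (tdiff j k) = - tdiff j k :> P.
      by rewrite msymB !msymXU tpermL tpermR opprB.
    apply: (mulIf nz_a); rewrite -rE qE /Defs.pcomp -mulgA ss mulg1.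
    by rewrite -[RHS]opprK -mulrN -msym_a -msymM -rE qE msymB msymK opprB.
  exact: mdivides_sub_msym.
have := q_gkm u j' k' jk'; rewrite !rE -mulrBl.
exact: mdivides_tdiff_mulr.
Qed.

End GKMClasses.

(** * Triangularity of the action on Schubert classes *)

Section SchubertExpansion.
Variables (R : realType) (n : nat).
Local Notation P := {mpoly (complex R)[n]}.
Variable Omega : 'S_n -> 'S_n -> P.
Hypothesis HOmega : forall v, is_schubert_class v (Omega v).
Implicit Types (s u v w x : 'S_n) (j k : 'I_n) (f : 'S_n -> P).

Lemma schubert_gkm v : is_gkm_class (Omega v).
Proof. by case: (HOmega v). Qed.

Lemma schubert_supp v u : Omega v u != 0 -> bruhat_le v u.
Proof.
case: (HOmega v) => _ supp _ _; apply: contraNT => /supp ->.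
by rewrite eqxx.
Qed.

Lemma schubert_homog v u : Omega v u != 0 -> Omega v u \is (len v).-homog.
Proof. by case: (HOmega v) => _ _ hv _; apply: hv. Qed.

Lemma schubert_diag v : Omega v v = inv_prod R v.
Proof. by case: (HOmega v). Qed.

Lemma msize_schubert v u : (msize (Omega v u) <= (len v).+1)%N.
Proof. exact/msize_le_homog/schubert_homog. Qed.

Definition below_span w f := exists c : 'S_n -> P,
  (forall v, bruhat_lt v w -> c v \is (len w - len v).-homog) /\
  (forall u, f u = \sum_(v | bruhat_lt v w) c v * Omega v u).

Lemma eq_below_span w f g :
  (forall u, f u = g u) -> below_span w f -> below_span w g.
Proof. by move=> fg [c [hc fE]]; exists c; split => // u; rewrite -fg. Qed.

Lemma below_span0 w : below_span w (fun _ => 0).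
Proof.
exists (fun _ => 0); split => [v _ | u]; first exact: dhomog0.
by rewrite big1 // => v _; rewrite mul0r.
Qed.

Lemma below_spanD w f g :
  below_span w f -> below_span w g -> below_span w (fun u => f u + g u).
Proof.
move=> [c [hc fE]] [d [hd gE]]; exists (fun v => c v + d v); split.
  by move=> v vw; rewrite rpredD ?hc ?hd.
by move=> u; rewrite fE gE -big_split; apply: eq_bigr => v _; rewrite mulrDl.
Qed.

Lemma below_span_sum w (r : seq 'S_n) (Q : pred 'S_n) (F : 'S_n -> 'S_n -> P) :
  (forall v, Q v -> below_span w (F v)) ->
  below_span w (fun u => \sum_(v <- r | Q v) F v u).
Proof.
move=> hF; elim: r => [|v r IH].
  by apply: eq_below_span (below_span0 w) => u; rewrite big_nil.
case Qv: (Q v); last by apply: eq_below_span IH => u; rewrite big_cons Qv.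
by apply: eq_below_span (below_spanD (hF v Qv) IH) => u; rewrite big_cons Qv.
Qed.

Lemma below_span_term w v (h : P) : bruhat_lt v w ->
  h \is (len w - len v).-homog -> below_span w (fun u => h * Omega v u).
Proof.
move=> vw hh; exists (fun x => if x == v then h else 0); split.
  by move=> x _; case: eqP => [-> // | _]; apply: dhomog0.
move=> u; rewrite (bigD1 v) //= eqxx big1 ?addr0 // => x /andP[_ /negbTE ->].
by rewrite mul0r.
Qed.

Lemma below_span_lift w v (h : P) f : bruhat_lt v w ->
  h \is (len w - len v).-homog -> below_span v f ->
  below_span w (fun u => h * f u).
Proof.
move=> vw hh [c [hc fE]].
exists (fun x => if bruhat_lt x v then h * c x else 0); split.
  move=> x _; case: ifP => xv; last exact: dhomog0.
  have -> : (len w - len x = (len w - len v) + (len v - len x))%N.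
    by have := bruhat_lt_len vw; have := bruhat_lt_len xv; lia.
  exact: dhomogM hh (hc x xv).
move=> u; rewrite fE big_distrr /= [RHS]big_mkcond [LHS]big_mkcond /=.
apply: eq_bigr => x _; case: ifP => xv; first by rewrite (bruhat_lt_trans xv vw) mulrA.
by case: ifP => _; rewrite ?mul0r.
Qed.

(* r_x is a multiple of the product of Inv(x), by a constant c for degree
   reasons; then r - c [Omega_x] vanishes by gkm_class_eq0. *)
Lemma gkm_class_schubert_lowest x (r : 'S_n -> P) : is_gkm_class r ->
  (forall u, r u != 0 -> (msize (r u) <= (len x).+1)%N) ->
  (forall u, r u != 0 -> u != x -> (len x < len u)%N) ->
  exists k : complex R, forall u, r u = k *: Omega x u.
Proof.
move=> r_gkm r_size r_supp.
have [g rxE] : mdivides (inv_prod R x) (r x).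
  apply: gkm_mdivides_inv_prod r_gkm _ => u nz_u.
  by case: (eqVneq u x) => [-> // | nux]; apply/ltnW/r_supp.
have g_const : g = (g@_0)%:MP.
  apply: msize1_polyC; case: (eqVneq g 0) => [-> | nz_g]; first by rewrite msize0.
  have : r x != 0 by rewrite rxE mulf_neq0 ?inv_prod_neq0.
  move/r_size; rewrite rxE msizeM ?inv_prod_neq0 // msize_inv_prod addnS /=.
  by rewrite -[(len x).+1]add1n leq_add2r.
have r_size' u : (msize (r u) <= (len x).+1)%N.
  by case: (eqVneq (r u) 0) => [-> | /r_size //]; rewrite msize0.
exists g@_0.
have rest0 := @gkm_class_eq0 R n (fun u => r u - g@_0 *: Omega x u) (len x).+1.
move=> u; apply/eqP; rewrite -subr_eq0; apply/eqP/rest0 => {u} [|u _|u nz].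
- apply/gkm_classD/gkm_classN => //.
  by move=> u j k jk; rewrite -scalerBr; apply/mdividesZ/schubert_gkm.
- rewrite (leq_trans (msizeD_le _ _)) // geq_max msizeN r_size'.
  exact: leq_trans (msizeZ_le _ _) (msize_schubert _ _).
- case: (eqVneq u x) => [ux | nux].
    by move: nz; rewrite ux rxE schubert_diag {1}g_const mul_mpolyC subrr eqxx.
  case: (eqVneq (r u) 0) => [ru0 | nz_ru]; last exact: r_supp.
  apply: bruhat_len_lt; last by rewrite eq_sym.
  apply: schubert_supp; apply: contraNneq nz => Ox0.
  by rewrite ru0 Ox0 scaler0 subrr.
Qed.

Definition act_triangular s :=
  forall w, below_span w (fun u => class_act s (Omega w) u - Omega w u).

Lemma act_triangular1 : act_triangular 1.
Proof.
by move=> w; apply: eq_below_span (below_span0 w) => u; rewrite class_act1 subrr.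
Qed.

Lemma act_triangularM a b :
  act_triangular a -> act_triangular b -> act_triangular (b * a).
Proof.
move=> Ta Tb w; have [c [hc cE]] := Tb w.
pose dev v u := class_act a (Omega v) u - Omega v u.
have actE u : \sum_(v | bruhat_lt v w)
                 (msym a (c v) * Omega v u + msym a (c v) * dev v u) + dev w u =
              class_act (b * a) (Omega w) u - Omega w u.
  rewrite -class_actM [in RHS]class_actE.
  set u' := Defs.pcomp a^-1 u.
  have -> : class_act b (Omega w) u' =
            \sum_(v | bruhat_lt v w) c v * Omega v u' + Omega w u'.
    by rewrite -cE subrK.
  rewrite msymD raddf_sum /= -[in RHS]addrA; congr (_ + _).
  by apply: eq_bigr => v _; rewrite msymM -mulrDr addrC subrK.
have termE v : bruhat_lt v w ->
    below_span w (fun u => msym a (c v) * Omega v u + msym a (c v) * dev v u).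
  move=> vw; have hv := msym_homog a (hc v vw).
  exact: below_spanD (below_span_term vw hv) (below_span_lift vw hv (Ta v)).
exact: eq_below_span actE (below_spanD (below_span_sum (index_enum _) termE) (Ta w)).
Qed.

Lemma act_triangular_adj j k : (k : nat) = j.+1 -> act_triangular (tperm j k).
Proof.
move=> kj w; have jk : (j < k)%N by rewrite kj.
have jnk : j != k by rewrite -val_eqE /= neq_ltn jk.
set s := tperm j k.
have [r r_gkm qE] := gkm_divided_difference jk (schubert_gkm w).
have r_size u : r u != 0 -> (msize (r u) <= len w)%N.
  move=> nz; rewrite -ltnS -(msize_mul_tdiff jnk nz) -qE.
  rewrite (leq_trans (msizeD_le _ _)) // geq_max msizeN msize_schubert andbT.
  rewrite class_actE; apply: msize_le_homog => nz'.
  by apply/msym_homog/schubert_homog; apply: contraNneq nz' => ->; rewrite msym0.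
have r_supp u : r u != 0 -> bruhat_le w u \/ bruhat_le w (u * s)%g.
  move=> nz; have : class_act s (Omega w) u - Omega w u != 0.
    by rewrite qE mulf_neq0 ?tdiff_neq0.
  rewrite /class_act /poly_act /Defs.pcomp tpermV.
  case: (eqVneq (Omega w u) 0) => [-> | /schubert_supp]; last by left.
  case: (eqVneq (Omega w (u * s)%g) 0) => [-> | /schubert_supp]; last by right.
  by rewrite msym0 subrr eqxx.
case wjk: (Defs.inv_pair w (j, k)); last first.
  have r0 : forall u, r u = 0.
    apply: (gkm_class_eq0 r_gkm (D := len w)) => [u /r_size // | u nz].
    case: (r_supp u nz) => [/bruhat_len_le // | /(bruhat_le_mul_adj kj)[// | [uw]]].
    have -> : u = (w * s)%g by rewrite -uw -mulgA tperm2 mulg1.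
    by rewrite inv_pair_mul_tperm // wjk.
  by apply: eq_below_span (below_span0 w) => u; rewrite qE r0 mul0r.
set v := (w * s)%g.
have lv : (len v).+1 = len w.
  by have := len_mul_adj_tperm w kj; rewrite wjk -/s -/v /=; lia.
have vw : bruhat_lt v w.
  apply/andP; split; first by apply/eqP => vw_eq; move: lv; rewrite vw_eq; lia.
  have wa : ((w^-1)%g k < (w^-1)%g j)%N by case/andP: wjk.
  have := bruhat_le_mul_tperm (v := v) wa.
  rewrite /v !permM !permKV tpermL tpermR => /(_ jk).
  by rewrite -mulgA tperm2 mulg1.
have [c rE] : exists c : complex R, forall u, r u = c *: Omega v u.
  apply: gkm_class_schubert_lowest r_gkm _ _ => [u /r_size | u nz nuv].
    by rewrite lv.
  case: (r_supp u nz) => [wu | /(bruhat_le_mul_adj kj)[lwu | [uw _]]].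
  - by rewrite -ltnS lv ltnS (leq_trans (bruhat_len_le wu)) ?leqnSn.
  - by rewrite -lv in lwu.
  - by move: nuv; rewrite /v /s -uw -mulgA tperm2 mulg1 eqxx.
apply: eq_below_span (below_span_term (h := c *: tdiff j k) vw _) => [u | ].
  by rewrite qE rE -!scalerAl mulrC.
by rewrite -lv subSnn; apply/dhomogZ/tdiff_homog.
Qed.

(* (j k) is the conjugate of (j k-1) by the adjacent transposition (k-1 k). *)
Lemma act_triangular_tperm j k : act_triangular (tperm j k).
Proof.
wlog jk : j k / (j < k)%N.
  move=> W; case: (ltngtP j k) => [| kj | /val_inj ->]; first exact: W.
    by rewrite tpermC; apply: W.
  by rewrite tperm1; apply: act_triangular1.
have [d kE] : exists d, (k : nat) = (j + d.+1)%N by exists (k - j.+1)%N; lia.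
elim: d j k jk kE => [|d IH] j k jk kE.
  by apply: act_triangular_adj; rewrite kE addn1.
have k'n : (k.-1 < n)%N by have := ltn_ord k; lia.
pose k' := Ordinal k'n.
have kk' : (k : nat) = k'.+1 by rewrite /= kE addnS.
have -> : tperm j k = (tperm k' k * tperm j k' * tperm k' k)%g.
  have := tpermJ j k' (tperm k' k); rewrite /conjg tpermV tpermL tpermD.
  - by move=> <-; rewrite mulgA.
  - by rewrite -val_eqE /= neq_ltn kE; lia.
  - by rewrite -val_eqE /= neq_ltn kE; lia.
apply: act_triangularM (act_triangular_adj kk') _.
apply: act_triangularM (IH _ _ _ _) (act_triangular_adj kk'); rewrite /= kE; lia.
Qed.

Lemma act_triangular_all s : act_triangular s.
Proof.
have [ts -> _] := prod_tpermP s; elim: ts => [|t ts IH].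
  by rewrite big_nil; apply: act_triangular1.
by rewrite big_cons; apply: act_triangularM IH (act_triangular_tperm _ _).
Qed.

End SchubertExpansion.

Theorem mainTheorem6 (R : realType) (n : nat)
  (Omega : 'S_n -> 'S_n -> Cpoly R n)
  (HOmega : forall v : 'S_n, is_schubert_class v (Omega v))
  (s w : 'S_n) :
  exists c : 'S_n -> Cpoly R n,
    (forall v : 'S_n, bruhat_lt v w -> c v != 0 ->
       (msize (c v)).-1 = (len w - len v)%N)
    /\ (forall u : 'S_n,
          class_act s (Omega w) u
          = Omega w u + \sum_(v : 'S_n | bruhat_lt v w) c v * Omega v u).
Proof.
have [c [hc cE]] := act_triangular_all HOmega s w.
exists c; split => [v vw nz_c | u]; first by rewrite (msize_homog nz_c (hc v vw)).
by rewrite -cE addrC subrK.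
Qed.
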